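(* In classical theory, with the bit as obit, the information content of every probability vector $\mathbf p=(p_1,\dots,p_d)$ equals its Shannon entropy: $I(\mathbf p)=H(\mathbf p)=-\sum_ip_i\log_2p_i$.
   Context: Classical theory as an OPT: a system is $\mathbb R^{d}$, states are substochastic vectors ($x_i\ge0$, $\sum_i x_i\le1$; normalized if the sum is 1), pure states are the basis vectors, effects are vectors with entries in $[0,1]$, transformations are substochastic matrices (channels: stochastic), parallel composition is the tensor product; the operational norm is the $\ell^1$ norm. A dilation of $\mathbf p$ is a joint probability vector on $\mathbb R^d\otimes\mathbb R^{d'}$ whose marginal is $\mathbf p$; a refinement of a state is a collection of substochastic vectors summing to it. Information content: a compression scheme is a pair of stochastic maps $\mathcal E:\mathbb R^{d^N}\to\mathbb R^{2^M}$, $\mathcal D:\mathbb R^{2^M}\to\mathbb R^{d^N}$; $E_{N,M,\varepsilon}(\mathbf p)$ is the set of schemes with $\sup_{d',\{\Psi_i\}}\sum_i\|((\mathcal D\mathcal E)\otimes I_{d'})\Psi_i-\Psi_i\|_1<\varepsilon$, over all ancillary dimensions $d'$ and refinements $\{\Psi_i\}$ of dilations of $\mathbf p^{\otimes N}$; $I(\mathbf p):=\lim_{\varepsilon\to0}\limsup_{N\to\infty}\min\{M:E_{N,M,\varepsilon}(\mathbf p)\ne\emptyset\}/N$. *)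

From HB Require Import structures.
From mathcomp Require Import all_boot all_order all_algebra.
From mathcomp Require Import all_classical all_reals all_analysis.
Set Implicit Arguments. Unset Strict Implicit. Unset Printing Implicit Defensive.
Import Order.TTheory GRing.Theory Num.Theory.
Import numFieldNormedType.Exports.
Local Open Scope classical_set_scope.
Local Open Scope ring_scope.

Section Classical.
Variable R : realType.

Definition prob_vec (d : nat) (p : 'I_d -> R) : Prop :=
  (forall i, 0 <= p i) /\ \sum_i p i = 1.

Definition shannon (d : nat) (p : 'I_d -> R) : R :=
  - \sum_i (if p i == 0 then 0 else p i * (ln (p i) / ln 2)).

(* A stochastic map (channel) from system X to system Y, as a kernel:
   K x y = probability of output basis state y on input basis state x. *)
Definition stochastic (X Y : finType) (K : X -> Y -> R) : Prop :=
  (forall x y, 0 <= K x y) /\ (forall x, \sum_y K x y = 1).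

Definition kcomp (X Y Z : finType) (E : X -> Y -> R) (D : Y -> Z -> R)
  : X -> Z -> R := fun x z => \sum_y E x y * D y z.

(* The system R^{d^N}: basis states are N-tuples of indices in 'I_d.
   p^{\otimes N} on it. *)
Definition tsys (d N : nat) : finType := {ffun 'I_N -> 'I_d}.
Definition tpow (d N : nat) (p : 'I_d -> R) : tsys d N -> R :=
  fun x => \prod_(k < N) p (x k).

Definition bsys (M : nat) : finType := 'I_(2 ^ M).

(* Psi (a vector on X (x) R^d') is a dilation of q: a joint probability
   vector whose marginal on X is q. *)
Definition dilation (X : finType) (d' : nat) (q : X -> R)
  (Psi : X -> 'I_d' -> R) : Prop :=
  (forall x a, 0 <= Psi x a) /\ \sum_x \sum_a Psi x a = 1 /\
  (forall x, \sum_a Psi x a = q x).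

Definition refinement (X : finType) (d' k : nat) (Psi : X -> 'I_d' -> R)
  (Psis : 'I_k -> X -> 'I_d' -> R) : Prop :=
  (forall i x a, 0 <= Psis i x a) /\
  (forall i, \sum_x \sum_a Psis i x a <= 1) /\
  (forall x a, \sum_i Psis i x a = Psi x a).

Definition refinement_error (X : finType) (d' k : nat) (T : X -> X -> R)
  (Psis : 'I_k -> X -> 'I_d' -> R) : R :=
  \sum_i \sum_y \sum_a `| \sum_x T x y * Psis i x a - Psis i y a |.

Definition error_values (X : finType) (q : X -> R) (T : X -> X -> R)
  : set R :=
  [set r | exists (d' k : nat) (Psi : X -> 'I_d' -> R)
             (Psis : 'I_k -> X -> 'I_d' -> R),
     dilation q Psi /\ refinement Psi Psis /\ r = refinement_error T Psis].

Definition schemes (d : nat) (p : 'I_d -> R) (N M : nat) (eps : R)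
  : set ((tsys d N -> bsys M -> R) * (bsys M -> tsys d N -> R)) :=
  [set ED | stochastic ED.1 /\ stochastic ED.2 /\
     (ereal_sup [set r%:E | r in error_values (@tpow d N p) (kcomp ED.1 ED.2)]
        < eps%:E)%E].

(* min {M : E_{N,M,eps}(p) <> empty} (as an extended real; +oo if empty). *)
Definition min_bits (d : nat) (p : 'I_d -> R) (N : nat) (eps : R) : \bar R :=
  ereal_inf [set (M%:R)%:E | M in [set M | @schemes d p N M eps !=set0]].

Definition rate (d : nat) (p : 'I_d -> R) (eps : R) : \bar R :=
  limn_esup (fun N : nat => (@min_bits d p N eps * (N%:R^-1)%:E)%E).

End Classical.

From Pilot Require Import Defs.
From HB Require Import structures.
From mathcomp Require Import all_boot all_order all_algebra.
From mathcomp Require Import all_classical all_reals all_analysis.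
From mathcomp Require Import ring lra.
Import Order.TTheory GRing.Theory Num.Theory.
Import numFieldNormedType.Exports.
Import Pilot.Defs.
Local Open Scope classical_set_scope.
Local Open Scope ring_scope.

(* For a channel T = D E, the supremum of the refinement error over all
   dilations and refinements of q is 2 (1 - sum_x q x T x x): the triangle
   inequality bounds every refinement by it, and the refinement of q into its
   point masses attains it.  A scheme with M bits and error eps is therefore
   exactly a classical code that returns the input with probability more than
   1 - eps / 2, and the claim reduces to Shannon's source coding theorem,
   proved with Chebyshev's inequality for the surprisal of p^{(x) N}, which
   has mean N H(p) and variance N Var(p):
   - coding the set of strings of surprisal at most N (H + del) (there are at
     most 2^{N (H + del)} of them) succeeds with probability -> 1;
   - the decoder's image has at most 2^M points, so strings of surprisal at
     least N (H - del) contribute at most 2^{M - N (H - del)} to the success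
     probability.
   Hence min_bits N eps = N H + o(N) for every 0 < eps <= 1/2, so the rate
   is H(p) for all small eps. *)

Set Implicit Arguments.
Unset Strict Implicit.
Unset Printing Implicit Defensive.

Section Kernels.
Variable R : realType.
Implicit Types X Y Z : finType.

Lemma ln2_gt0 : 0 < ln (2 : R).
Proof. by rewrite ln_gt0 // ltr1n. Qed.

Lemma pow2E (M : nat) : (2 ^ M)%:R = expR (ln 2 * M%:R) :> R.
Proof. by rewrite mulrC expRM_natl lnK ?posrE // natrX. Qed.

Lemma prob_vec_dim_gt0 d (p : 'I_d -> R) : prob_vec p -> (0 < d)%N.
Proof.
case: d p => [|d] p [_ p1] //; move: p1; rewrite big_ord0 => /eqP.
by rewrite eq_sym oner_eq0.
Qed.

Lemma sum_delta_mull X (y : X) (f : X -> R) : \sum_x (y == x)%:R * f x = f y.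
Proof.
rewrite (bigD1 y) //= eqxx mul1r big1 ?addr0 // => x.
by rewrite eq_sym => /negbTE ->; rewrite mul0r.
Qed.

Lemma prob_le1 X (q : X -> R) x :
  (forall x, 0 <= q x) -> \sum_x q x = 1 -> q x <= 1.
Proof. by move=> q0 <-; rewrite (bigD1 x) //= lerDl sumr_ge0. Qed.

Lemma stochastic_le1 X Y (K : X -> Y -> R) x y : stochastic K -> K x y <= 1.
Proof. by case=> K0 K1; apply: prob_le1. Qed.

Lemma kcomp_stochastic X Y Z (E : X -> Y -> R) (D : Y -> Z -> R) :
  stochastic E -> stochastic D -> stochastic (kcomp E D).
Proof.
move=> [E0 E1] [D0 D1]; split=> [x z|x].
  by apply: sumr_ge0 => y _; rewrite mulr_ge0.
rewrite /kcomp exchange_big /= -(E1 x); apply: eq_bigr => y _.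
by rewrite -mulr_sumr D1 mulr1.
Qed.

Definition kfun X Y (f : X -> Y) : X -> Y -> R := fun x y => (y == f x)%:R.

Lemma kfun_stochastic X Y (f : X -> Y) : stochastic (kfun f).
Proof.
split=> [x y|x]; first by rewrite ler0n.
rewrite -[RHS](sum_delta_mull (f x) (fun=> 1)).
by apply: eq_bigr => y _; rewrite mulr1 eq_sym.
Qed.

Lemma kcomp_kfun X Y Z (f : X -> Y) (g : Y -> Z) x z :
  kcomp (kfun f) (kfun g) x z = kfun (g \o f) x z.
Proof.
rewrite /kcomp (eq_bigr (fun y => (f x == y)%:R * kfun g y z)) ?sum_delta_mull //.
by move=> y _; rewrite eq_sym.
Qed.

Lemma trace_kcomp_le X Y (E : X -> Y -> R) (D : Y -> X -> R) :
  stochastic E -> stochastic D -> \sum_x kcomp E D x x <= #|Y|%:R.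
Proof.
move=> sE [D0 D1]; rewrite /kcomp exchange_big /=.
apply: le_trans (_ : \sum_(y : Y) \sum_x D y x <= _).
  apply: ler_sum => y _; apply: ler_sum => x _.
  by rewrite ler_piMl ?D0 ?(stochastic_le1 _ _ sE).
by rewrite (eq_bigr (fun=> 1)) ?sumr_const.
Qed.

Lemma set_code X Y (x0 : X) (y0 : Y) (S : {set X}) :
  (#|S| <= #|Y|)%N -> exists (f : X -> Y) (g : Y -> X), {in S, cancel f g}.
Proof.
move=> HS; set s := enum S; set t := enum Y.
exists (fun x => nth y0 t (index x s)), (fun y => nth x0 s (index y t)) => x xS.
have xs : x \in s by rewrite mem_enum.
have lt : (index x s < size t)%N.
  by rewrite /t -cardT; apply: leq_trans HS; rewrite cardE index_mem.
by rewrite index_uniq ?enum_uniq // nth_index.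
Qed.

Definition success_prob X (q : X -> R) (T : X -> X -> R) : R :=
  \sum_x q x * T x x.

End Kernels.

Arguments kfun {R X Y} f.

Section RefinementError.
Variables (R : realType) (X : finType) (T : X -> X -> R).
Hypothesis sT : stochastic T.

Lemma stochastic_dist_delta x :
  \sum_y `|T x y - (y == x)%:R| = 2 * (1 - T x x).
Proof.
have [T0 T1] := sT; have Txx1 : T x x <= 1 by exact: stochastic_le1.
have Hx := T1 x; rewrite (bigD1 x) //= in Hx.
rewrite (bigD1 x) //= eqxx ler0_norm ?subr_le0 //.
rewrite (eq_bigr (T x)) => [|y /negbTE ->]; last by rewrite subr0 ger0_norm.
have -> : \sum_(y | y != x) T x y = 1 - T x x by rewrite -Hx addrAC subrr add0r.
by rewrite opprB mulr2n mulrDl mul1r.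
Qed.

Lemma refinement_error_le (q : X -> R) d' k (Psi : X -> 'I_d' -> R)
    (Psis : 'I_k -> X -> 'I_d' -> R) :
  dilation q Psi -> refinement Psi Psis ->
  refinement_error T Psis <= 2 * \sum_x q x * (1 - T x x).
Proof.
move=> [_ [_ Hm]] [P0 [_ Ps]].
apply: (@le_trans _ _ (\sum_i \sum_y \sum_a \sum_x
    `|T x y - (y == x)%:R| * Psis i x a)).
  apply: ler_sum => i _; apply: ler_sum => y _; apply: ler_sum => a _.
  have -> : \sum_x T x y * Psis i x a - Psis i y a =
            \sum_x (T x y - (y == x)%:R) * Psis i x a.
    by under [RHS]eq_bigr do rewrite mulrBl; rewrite sumrB sum_delta_mull.
  apply: le_trans (ler_norm_sum _ _ _) _.
  by apply: ler_sum => x _; rewrite normrM (ger0_norm (P0 _ _ _)).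
rewrite exchange_big /=.
rewrite (eq_bigr (fun y => \sum_x \sum_i \sum_a
    `|T x y - (y == x)%:R| * Psis i x a)); last first.
  move=> y _; rewrite [RHS]exchange_big /=; apply: eq_bigr => i _.
  by rewrite exchange_big.
rewrite exchange_big /= mulr_sumr; apply: ler_sum => x _.
rewrite mulrCA -stochastic_dist_delta mulr_sumr; apply: ler_sum => y _.
rewrite exchange_big /= -Hm mulr_suml; apply: ler_sum => a _.
by rewrite -Ps mulr_suml; apply: ler_sum => i _; rewrite mulrC.
Qed.

(* The bound is attained by the refinement of q into its point masses, with a
   trivial ancilla. *)
Lemma point_refinement_error (q : X -> R) :
  (forall x, 0 <= q x) -> \sum_x q x = 1 ->
  error_values q T (2 * \sum_x q x * (1 - T x x)).
Proof.
move=> q0 q1.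
pose Psi (x : X) (a : 'I_1) := q x.
pose Psis (i : 'I_#|X|) (x : X) (a : 'I_1) := (enum_val i == x)%:R * q x.
exists 1%N, #|X|, Psi, Psis; split; [|split].
- split=> [x a|]; first exact: q0.
  by split=> [|x]; rewrite ?big_ord1 // -q1; apply: eq_bigr => x _; rewrite big_ord1.
- split=> [i x a|]; first by rewrite mulr_ge0 ?ler0n.
  split=> [i|x a].
    under eq_bigr do rewrite big_ord1.
    by rewrite sum_delta_mull prob_le1.
  rewrite /Psis /Psi (bigD1 (enum_rank x)) //= enum_rankK eqxx mul1r.
  rewrite big1 ?addr0 // => i /negbTE ix.
  by rewrite -(inj_eq (@enum_rank_inj X)) enum_valK ix mul0r.
rewrite /refinement_error (reindex (@enum_rank X)) /=; last first.
  exact: onW_bij (enum_rank_bij X).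
rewrite mulr_sumr; apply: eq_bigr => x _.
rewrite mulrCA -stochastic_dist_delta mulr_sumr; apply: eq_bigr => y _.
rewrite big_ord1 /Psis (eq_bigr (fun x' => (x == x')%:R * (T x' y * q x'))).
  rewrite enum_rankK sum_delta_mull.
  have -> : (x == y)%:R * q y = (y == x)%:R * q x.
    by case: eqP => [->|/eqP xy]; rewrite ?eqxx // eq_sym (negbTE xy) !mul0r.
  by rewrite -mulrBl normrM (ger0_norm (q0 x)) mulrC.
by move=> x' _; rewrite enum_rankK mulrCA.
Qed.

Lemma ereal_sup_error_values (q : X -> R) :
  (forall x, 0 <= q x) -> \sum_x q x = 1 ->
  ereal_sup [set r%:E | r in error_values q T] = (2 * (1 - success_prob q T))%:E.
Proof.
move=> q0 q1.
have -> : 1 - success_prob q T = \sum_x q x * (1 - T x x).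
  by rewrite -[in LHS]q1 -sumrB; apply: eq_bigr => x _; rewrite mulrBr mulr1.
apply/eqP; rewrite eq_le; apply/andP; split.
  apply: ge_ereal_sup => _ [r [d' [k [Psi [Psis [Hd [Hr ->]]]]]] <-].
  by rewrite lee_fin; apply: refinement_error_le Hd Hr.
apply: ereal_sup_ubound; exists (2 * \sum_x q x * (1 - T x x)) => //.
exact: point_refinement_error.
Qed.

End RefinementError.

Lemma cvg_ratio_nat (R : realType) (m : nat -> R) (h : R) :
  (forall del, 0 < del -> \forall N \near \oo, `|m N - N%:R * h| <= N%:R * del + 1) ->
  m N / N%:R @[N --> \oo] --> h.
Proof.
move=> Hm; apply/cvgrPdist_le => e e0; near=> N.
have Ne : 2 / e < N%:R by near: N; exact: nbhs_infty_gtr.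
have N0 : 0 < N%:R :> R by apply: lt_trans Ne; rewrite divr_gt0.
have HN : `|m N - N%:R * h| <= N%:R * (e / 2) + 1.
  by near: N; apply: Hm; rewrite divr_gt0.
have -> : h - m N / N%:R = (N%:R * h - m N) / N%:R.
  by rewrite mulrBl [N%:R * h]mulrC mulfK ?gt_eqF.
rewrite normrM normfV (gtr0_norm N0) ler_pdivrMr // distrC.
by move: Ne; rewrite ltr_pdivrMr // => Ne; lra.
Unshelve. all: by end_near. Qed.

Section SourceCoding.
Variables (R : realType) (d : nat) (p : 'I_d -> R).
Hypothesis pv : prob_vec p.
Local Notation q N := (@tpow R d N p).

Let p_ge0 j : 0 <= p j := proj1 pv j.
Let p_sum1 : \sum_j p j = 1 := proj2 pv.

Lemma tpow_ge0 N x : 0 <= q N x.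
Proof. exact: prodr_ge0. Qed.

Lemma tpow_sum1 N : \sum_x q N x = 1.
Proof. by rewrite /tpow -(bigA_distr_bigA (fun _ j => p j)) big1. Qed.

(* Expanding the square, the cross terms factor through sum_j p j Y j = 0. *)
Lemma tpow_sum_sqr N (Y : 'I_d -> R) : \sum_j p j * Y j = 0 ->
  \sum_x q N x * (\sum_k Y (x k)) ^+ 2 = N%:R * \sum_j p j * Y j ^+ 2.
Proof.
move=> pY.
pose G (k l m : 'I_N) (j : 'I_d) :=
  p j * (if m == k then Y j else 1) * (if m == l then Y j else 1).
have prod_if (f : 'I_N -> R) k : \prod_m (if m == k then f m else 1) = f k.
  by rewrite (bigD1 k) //= eqxx big1 ?mulr1 // => m /negbTE ->.
have sum_prod F : \sum_(x : tsys d N) \prod_m F m (x m) = \prod_m \sum_j F m j.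
  by rewrite bigA_distr_bigA.
have expand x : q N x * (\sum_k Y (x k)) ^+ 2 = \sum_k \sum_l \prod_m G k l m (x m).
  rewrite expr2 mulr_suml mulr_sumr; apply: eq_bigr => k _.
  rewrite mulr_sumr mulr_sumr; apply: eq_bigr => l _.
  by rewrite /G !big_split /= !prod_if mulrA.
under eq_bigr do rewrite expand.
rewrite exchange_big /= (eq_bigr (fun=> \sum_j p j * Y j ^+ 2)) => [|k _].
  by rewrite sumr_const card_ord mulr_natl.
rewrite exchange_big /= (bigD1 k) //= [X in _ + X]big1 ?addr0 => [|l lk].
  rewrite sum_prod (bigD1 k) //= [X in _ * X]big1 ?mulr1 => [|m /negbTE mk].
    by apply: eq_bigr => j _; rewrite /G eqxx expr2 mulrA.
  by rewrite -[RHS]p_sum1; apply: eq_bigr => j _; rewrite /G mk !mulr1.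
rewrite sum_prod (bigD1 k) //= (_ : \sum_j G k l k j = 0) ?mul0r //.
by rewrite -[RHS]pY; apply: eq_bigr => j _; rewrite /G eqxx eq_sym (negbTE lk) mulr1.
Qed.

(* Zero off the support of p, matching the convention 0 log 0 = 0. *)
Definition surprisal (j : 'I_d) : R := if p j == 0 then 0 else - (ln (p j) / ln 2).

Definition tsurprisal N (x : tsys d N) : R := \sum_k surprisal (x k).

Definition surprisal_var : R := \sum_j p j * (surprisal j - shannon p) ^+ 2.

Lemma shannonE : shannon p = \sum_j p j * surprisal j.
Proof.
rewrite /shannon -sumrN; apply: eq_bigr => j _; rewrite /surprisal.
by case: eqP => _; rewrite ?mulr0 ?oppr0 // mulrN.
Qed.

Lemma surprisal_ge0 j : 0 <= surprisal j.
Proof.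
rewrite /surprisal; case: eqP => // _.
by rewrite oppr_ge0 pmulr_lle0 ?invr_gt0 ?ln2_gt0 // ln_le0 // prob_le1.
Qed.

Lemma shannon_ge0 : 0 <= shannon p.
Proof. by rewrite shannonE sumr_ge0 // => j _; rewrite mulr_ge0 ?surprisal_ge0. Qed.

Lemma surprisal_var_ge0 : 0 <= surprisal_var.
Proof. by rewrite sumr_ge0 // => j _; rewrite mulr_ge0 ?sqr_ge0. Qed.

Lemma tpow_gt0E N x : 0 < q N x -> q N x = expR (- (ln 2 * tsurprisal x)).
Proof.
move=> qx.
have pn0 k : p (x k) != 0.
  by apply: contraTneq qx => pk; rewrite /tpow (bigD1 k) //= pk mul0r ltxx.
have -> : - (ln 2 * tsurprisal x) = \sum_k ln (p (x k)).
  rewrite /tsurprisal mulr_sumr -sumrN; apply: eq_bigr => k _.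
  rewrite /surprisal (negbTE (pn0 k)) mulrN opprK mulrCA.
  by rewrite divff ?mulr1 ?gt_eqF ?ln2_gt0.
rewrite expR_sum /tpow; apply: eq_bigr => k _.
by rewrite lnK // posrE lt_def pn0 p_ge0.
Qed.

Lemma tpow_le_expR N x : q N x <= expR (- (ln 2 * tsurprisal x)).
Proof.
have [->|qx] := eqVneq (q N x) 0; first exact/ltW/expR_gt0.
by rewrite tpow_gt0E // lt_def qx tpow_ge0.
Qed.

Lemma tsurprisal_chebyshev N (del : R) (P : pred (tsys d N)) : 0 <= del ->
  (forall x, P x -> N%:R * del <= `|tsurprisal x - N%:R * shannon p|) ->
  N%:R * del ^+ 2 * \sum_(x | P x) q N x <= surprisal_var.
Proof.
move=> del0 HP.
have [N0|N0] := eqVneq N 0%N.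
  by rewrite (_ : N%:R = 0) ?N0 // !mul0r surprisal_var_ge0.
have mean0 : \sum_j p j * (surprisal j - shannon p) = 0.
  under eq_bigr do rewrite mulrBr.
  by rewrite sumrB -mulr_suml p_sum1 mul1r shannonE subrr.
rewrite -(ler_pM2l (_ : 0 < N%:R :> R)) ?ltr0n ?lt0n // -(tpow_sum_sqr N mean0).
have -> : N%:R * (N%:R * del ^+ 2 * \sum_(x | P x) q N x) =
          \sum_(x | P x) q N x * (N%:R * del) ^+ 2.
  by rewrite -mulr_suml; ring.
apply: le_trans (_ : \sum_(x | P x)
    q N x * (\sum_k (surprisal (x k) - shannon p)) ^+ 2 <= _).
  apply: ler_sum => x Px; rewrite ler_wpM2l ?tpow_ge0 //.
  have -> : \sum_k (surprisal (x k) - shannon p) = tsurprisal x - N%:R * shannon p.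
    by rewrite sumrB sumr_const card_ord mulr_natl.
  by rewrite -[leRHS]real_normK ?num_real // ler_sqr ?nnegrE ?mulr_ge0 ?HP.
rewrite [leRHS](bigID P) /= lerDl sumr_ge0 // => x _.
by rewrite mulr_ge0 ?tpow_ge0 ?sqr_ge0.
Qed.

Lemma card_typical_le N (c : R) :
  #|[set x : tsys d N | (0 < q N x) && (tsurprisal x <= c)]%SET|%:R <= expR (ln 2 * c).
Proof.
set S := [set x | _]%SET.
have : \sum_(x in S) expR (- (ln 2 * c)) <= 1.
  rewrite -[leRHS](tpow_sum1 N); apply: le_trans (_ : \sum_(x in S) q N x <= _).
    apply: ler_sum => x; rewrite inE => /andP[qx xc].
    by rewrite tpow_gt0E // ler_expR lerN2 ler_pM2l ?ln2_gt0.
  rewrite [leRHS](bigID (fun x => x \in S)) /= lerDl sumr_ge0 // => x _.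
  exact: tpow_ge0.
by rewrite sumr_const expRN -[_ *+ _]mulr_natl ler_pdivrMr ?expR_gt0 // mul1r.
Qed.

Lemma schemesE N M (eps : R)
    (E : tsys d N -> bsys M -> R) (D : bsys M -> tsys d N -> R) :
  @schemes R d p N M eps (E, D) <->
  [/\ stochastic E, stochastic D & 1 - eps / 2 < success_prob (q N) (kcomp E D)].
Proof.
have sup sE sD := ereal_sup_error_values (@kcomp_stochastic _ _ _ _ E D sE sD)
  (@tpow_ge0 N) (tpow_sum1 N).
split=> [[sE [sD]] /=|[sE sD Hs]].
  by rewrite (sup sE sD) lte_fin => Hs; split=> //; lra.
by do 2!split=> //; rewrite /= (sup sE sD) lte_fin; lra.
Qed.

Lemma achievability N M (eps c : R) :
  expR (ln 2 * c) <= (2 ^ M)%:R ->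
  2 * \sum_(x | c < tsurprisal x) q N x < eps ->
  @schemes R d p N M eps !=set0.
Proof.
move=> Hc Heps.
pose x0 : tsys d N := [ffun=> Ordinal (prob_vec_dim_gt0 pv)].
have y0 : bsys M by exists 0%N; rewrite expn_gt0.
set S := [set x : tsys d N | (0 < q N x) && (tsurprisal x <= c)]%SET.
have HS : (#|S| <= #|bsys M|)%N.
  by rewrite card_ord -(ler_nat R); apply: le_trans (card_typical_le N c) Hc.
have [f [g fK]] := set_code x0 y0 HS.
exists (kfun f, kfun g); apply/schemesE; split; [exact: kfun_stochastic..|].
suff : 1 - \sum_(x | c < tsurprisal x) q N x <=
       success_prob (q N) (kcomp (kfun f) (kfun g)) by lra.
rewrite -(tpow_sum1 N) (bigID (fun x => c < tsurprisal x)) /= addrAC subrr add0r.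
apply: le_trans (_ : \sum_(x | ~~ (c < tsurprisal x)) q N x * kfun (g \o f) x x <= _).
  apply: ler_sum => x; rewrite -leNgt => xc.
  have [->|qx] := eqVneq (q N x) 0; first by rewrite mul0r.
  have xS : x \in S by rewrite inE lt_def qx tpow_ge0 xc.
  by rewrite /kfun /= fK // eqxx mulr1.
rewrite /success_prob [leRHS](eq_bigr (fun x => q N x * kfun (g \o f) x x)) => [|x _].
  rewrite [leRHS](bigID (fun x => c < tsurprisal x)) /= -[leLHS]add0r.
  by apply: lerD => //; apply: sumr_ge0 => x _; rewrite mulr_ge0 ?tpow_ge0 ?ler0n.
by rewrite kcomp_kfun.
Qed.

Lemma converse N M (eps c : R) :
  @schemes R d p N M eps !=set0 ->
  1 - eps / 2 < \sum_(x | tsurprisal x < c) q N x + expR (- (ln 2 * c)) * (2 ^ M)%:R.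
Proof.
move=> [[E D] /schemesE[sE sD Hs]]; apply: lt_le_trans Hs _.
have [T0 _] := kcomp_stochastic sE sD.
apply: le_trans (_ : \sum_x ((if tsurprisal x < c then q N x else 0)
                     + expR (- (ln 2 * c)) * kcomp E D x x) <= _).
  apply: ler_sum => x _; have Txx1 := stochastic_le1 x x (kcomp_stochastic sE sD).
  case: ltP => [xc|cx].
    by rewrite -[leLHS]addr0 lerD ?mulr_ge0 ?ler_piMr ?tpow_ge0 // ltW ?expR_gt0.
  rewrite add0r ler_wpM2r //; apply: le_trans (tpow_le_expR x) _.
  by rewrite ler_expR lerN2 ler_pM2l ?ln2_gt0.
rewrite big_split /= -big_mkcond lerD2l -mulr_sumr ler_wpM2l ?expR_ge0 //.
by apply: le_trans (trace_kcomp_le sE sD) _; rewrite card_ord.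
Qed.

Lemma min_bits_ub N (eps del : R) : 0 < del ->
  2 * surprisal_var < N%:R * del ^+ 2 * eps ->
  (min_bits p N eps <= (N%:R * (shannon p + del) + 1)%:E)%E.
Proof.
move=> del0 Nlarge; set c := N%:R * (shannon p + del).
have c0 : 0 <= c by rewrite mulr_ge0 ?ler0n ?addr_ge0 ?shannon_ge0 ?ltW.
have /andP[tc cM] := truncn_itv c0; set M := (Num.truncn c).+1.
have HM : @schemes R d p N M eps !=set0.
  apply: (achievability (c := c)).
    by rewrite pow2E ler_expR ler_pM2l ?ln2_gt0 // ltW.
  have far (x : tsys d N) :
      c < tsurprisal x -> N%:R * del <= `|tsurprisal x - N%:R * shannon p|.
    by move=> cx; apply: le_trans _ (ler_norm _); move: cx; rewrite /c mulrDr; lra.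
  have := tsurprisal_chebyshev (ltW del0) far.
  have := surprisal_var_ge0; move: Nlarge.
  set Q := \sum_(x | _) _; set K := N%:R * del ^+ 2.
  have : 0 <= K by rewrite mulr_ge0 ?ler0n ?sqr_ge0.
  nra.
apply: le_trans (_ : (M%:R)%:E <= _)%E; first by apply: ereal_inf_lbound; exists M.
by rewrite lee_fin /M -addn1 natrD lerD2r.
Qed.

Lemma min_bits_lb N (eps del : R) : eps <= 2^-1 -> 0 < del ->
  4 * surprisal_var < N%:R * del ^+ 2 ->
  ((N%:R * (shannon p - del) - 1)%:E <= min_bits p N eps)%E.
Proof.
move=> eps_le del0 Nlarge; set c := N%:R * (shannon p - del).
apply: le_ereal_inf_tmp => _ [M HM <-]; rewrite lee_fin.
have far (x : tsys d N) :
    tsurprisal x < c -> N%:R * del <= `|tsurprisal x - N%:R * shannon p|.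
  move=> xc; rewrite distrC; apply: le_trans _ (ler_norm _).
  by move: xc; rewrite /c mulrBr; lra.
have cheb := tsurprisal_chebyshev (ltW del0) far.
have conv := converse c HM; rewrite pow2E -expRD in conv.
set Q := \sum_(x | _) _ in cheb conv.
have Q_lt : Q < 4^-1.
  have := surprisal_var_ge0; move: Nlarge cheb; set K := N%:R * del ^+ 2.
  have : 0 <= Q by rewrite sumr_ge0 // => x _; exact: tpow_ge0.
  nra.
have : expR (- ln 2) < expR (- (ln 2 * c) + ln 2 * M%:R).
  by rewrite expRN lnK ?posrE //; lra.
rewrite ltr_expR => HcM.
have : ln 2 * (c - 1) < ln 2 * M%:R by rewrite mulrBr mulr1; lra.
by rewrite ltr_pM2l ?ln2_gt0 // => /ltW.
Qed.

Lemma min_bits_near (eps del : R) : 0 < eps -> eps <= 2^-1 -> 0 < del ->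
  \forall N \near \oo, exists m : R,
    min_bits p N eps = m%:E /\ `|m - N%:R * shannon p| <= N%:R * del + 1.
Proof.
move=> eps0 eps_le del0; near=> N.
have ub : (min_bits p N eps <= (N%:R * (shannon p + del) + 1)%:E)%E.
  apply: min_bits_ub => //; rewrite -mulrA -ltr_pdivrMr ?mulr_gt0 ?exprn_gt0 //.
  by near: N; exact: nbhs_infty_gtr.
have lb : ((N%:R * (shannon p - del) - 1)%:E <= min_bits p N eps)%E.
  apply: min_bits_lb => //; rewrite -ltr_pdivrMr ?exprn_gt0 //.
  by near: N; exact: nbhs_infty_gtr.
case: (min_bits p N eps) lb ub => [m||] //=; rewrite !lee_fin => lb ub.
exists m; split=> //; rewrite mulrDr in ub; rewrite mulrBr in lb.
by rewrite ler_norml; apply/andP; split; lra.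
Unshelve. all: by end_near. Qed.

Lemma rate_shannon (eps : R) : 0 < eps -> eps <= 2^-1 -> rate p eps = (shannon p)%:E.
Proof.
move=> eps0 eps_le; apply: (cvg_limn_einf_sup _).2.
have fin := min_bits_near eps0 eps_le ltr01.
apply: cvg_EFin; first by apply: filterS fin => N [m [-> _]].
apply: cvg_trans (cvg_ratio_nat (m := fun N => fine (min_bits p N eps)) _).
  by apply: near_eq_cvg; apply: filterS fin => N [m [Hm _]]; rewrite /= Hm.
move=> del del0; apply: filterS (min_bits_near eps0 eps_le del0) => N [m [Hm]].
by rewrite Hm.
Qed.

End SourceCoding.

Theorem mainTheorem15 (R : realType) (d : nat) (p : 'I_d -> R) :
  prob_vec p ->
  rate p eps @[eps --> 0^'+] --> (shannon p)%:E.
Proof.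
move=> pv; apply: cvg_near_cst; near=> eps.
apply: (rate_shannon pv); near: eps; first exact: nbhs_right_gt.
by apply: nbhs_right_le; rewrite invr_gt0.
Unshelve. all: by end_near. Qed.
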